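(* Let $\mathcal{K}$ be a $2$-category with pseudolimits of arrows and powers by the free-living isomorphism, and let $f\colon A\to B$ be a morphism. Then: (1) $f$ is a representable isofibration if and only if $w_f\colon A^{\mathbb{I}}\to L_f$ is a representable isofibration; (2) $f$ is a normal isofibration if and only if $w_f$ is a normal isofibration. In either case, $w_f$ is then a retract equivalence.
   Context: $\mathbb{I}$ is the category with two objects and an isomorphism between them; $A^{\mathbb{I}}$ is the power of $A$ by $\mathbb{I}$ (equivalently the pseudolimit of $1_A$), with projections $\mathrm{dom},\mathrm{cod}\colon A^{\mathbb{I}}\to A$. The pseudolimit of $f$ is an object $L_f$ with $u_f\colon L_f\to A$, $v_f\colon L_f\to B$ and invertible $\lambda_f\colon v_f\cong fu_f$, universal among such data; it may be constructed as the pullback of $\mathrm{cod}\colon B^{\mathbb{I}}\to B$ along $f$. $w_f\colon A^{\mathbb{I}}\to L_f$ is the induced morphism with $u_fw_f=\mathrm{cod}$ and whose composite with the projection $L_f\to B^{\mathbb{I}}$ is $f^{\mathbb{I}}$ (it is the Leibniz power of $f$ by the inclusion $1\to\mathbb{I}$). An equivalence $f$ is a retract equivalence if it has a section (equivalently, it has equivalence data with counit an identity). A morphism $f\colon A\to B$ is a representable isofibration if for every object $X$, given $g\colon X\to A$, $h\colon X\to B$ and invertible $\alpha\colon fg\cong h$, there exist $h'\colon X\to A$ and invertible $\alpha'\colon g\cong h'$ with $f\alpha'=\alpha$. A cleavage is a choice of such $(\alpha',h')$ for every $(g,\alpha,h)$, natural in $X$; it is normal if $\alpha'$ is an identity whenever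 $\alpha$ is. A normal isofibration is a representable isofibration admitting a normal cleavage. *)

Definition cast {X : Type} (C : X -> X -> Type) {f f' g g' : X}
  (e1 : f = f') (e2 : g = g') (a : C f g) : C f' g' :=
  match e1 in _ = y1 return C y1 g' with
  | eq_refl => match e2 in _ = y2 return C f y2 with eq_refl => a end
  end.

Definition hcell_eq {X : Type} (C : X -> X -> Type) {f g f' g' : X}
  (a : C f g) (b : C f' g') : Prop :=
  exists (e1 : f = f') (e2 : g = g'), cast C e1 e2 a = b.

Set Implicit Arguments.
Unset Strict Implicit.

Record TwoCatData := {
  Ob : Type;
  Hom : Ob -> Ob -> Type;
  Cell : forall A B : Ob, Hom A B -> Hom A B -> Type;
  id1 : forall A : Ob, Hom A A;
  (* comp1 g f = g o f *)
  comp1 : forall A B C : Ob, Hom B C -> Hom A B -> Hom A C;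
  id2 : forall (A B : Ob) (f : Hom A B), Cell f f;
  (* vcomp b a = b . a  (first a, then b) *)
  vcomp : forall (A B : Ob) (f g h : Hom A B), Cell g h -> Cell f g -> Cell f h;
  lwhisk : forall (A B C : Ob) (h : Hom B C) (f g : Hom A B),
      Cell f g -> Cell (comp1 h f) (comp1 h g);
  rwhisk : forall (A B C : Ob) (f g : Hom B C),
      Cell f g -> forall h : Hom A B, Cell (comp1 f h) (comp1 g h)
}.

Arguments Hom {t}.
Arguments Cell {t A B}.
Arguments id1 {t}.
Arguments comp1 {t A B C}.
Arguments id2 {t A B}.
Arguments vcomp {t A B f g h}.
Arguments lwhisk {t A B C} h {f g}.
Arguments rwhisk {t A B C f g} a h.

Section Defs.
Variable K : TwoCatData.

Definition HCell {A B : Ob K} := @Cell K A B.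

Record TwoCatAxioms := {
  comp1_assoc : forall (A B C D : Ob K) (h : Hom C D) (g : Hom B C) (f : Hom A B),
      comp1 h (comp1 g f) = comp1 (comp1 h g) f;
  comp1_idl : forall (A B : Ob K) (f : Hom A B), comp1 (id1 B) f = f;
  comp1_idr : forall (A B : Ob K) (f : Hom A B), comp1 f (id1 A) = f;
  vcomp_assoc : forall (A B : Ob K) (f g h k : Hom A B)
      (c : Cell h k) (b : Cell g h) (a : Cell f g),
      vcomp c (vcomp b a) = vcomp (vcomp c b) a;
  vcomp_idl : forall (A B : Ob K) (f g : Hom A B) (a : Cell f g), vcomp (id2 g) a = a;
  vcomp_idr : forall (A B : Ob K) (f g : Hom A B) (a : Cell f g), vcomp a (id2 f) = a;
  lwhisk_id2 : forall (A B C : Ob K) (h : Hom B C) (f : Hom A B),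
      lwhisk h (id2 f) = id2 (comp1 h f);
  rwhisk_id2 : forall (A B C : Ob K) (f : Hom B C) (h : Hom A B),
      rwhisk (id2 f) h = id2 (comp1 f h);
  lwhisk_vcomp : forall (A B C : Ob K) (h : Hom B C) (f g k : Hom A B)
      (b : Cell g k) (a : Cell f g),
      lwhisk h (vcomp b a) = vcomp (lwhisk h b) (lwhisk h a);
  rwhisk_vcomp : forall (A B C : Ob K) (f g k : Hom B C) (h : Hom A B)
      (b : Cell g k) (a : Cell f g),
      rwhisk (vcomp b a) h = vcomp (rwhisk b h) (rwhisk a h);
  lwhisk_id1 : forall (A B : Ob K) (f g : Hom A B) (a : Cell f g),
      hcell_eq HCell (lwhisk (id1 B) a) a;
  rwhisk_id1 : forall (A B : Ob K) (f g : Hom A B) (a : Cell f g),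
      hcell_eq HCell (rwhisk a (id1 A)) a;
  lwhisk_comp1 : forall (A B C D : Ob K) (k : Hom C D) (h : Hom B C)
      (f g : Hom A B) (a : Cell f g),
      hcell_eq HCell (lwhisk k (lwhisk h a)) (lwhisk (comp1 k h) a);
  rwhisk_comp1 : forall (A B C D : Ob K) (f g : Hom C D) (a : Cell f g)
      (h : Hom B C) (k : Hom A B),
      hcell_eq HCell (rwhisk (rwhisk a h) k) (rwhisk a (comp1 h k));
  lrwhisk : forall (A B C D : Ob K) (k : Hom C D) (f g : Hom B C) (a : Cell f g)
      (h : Hom A B),
      hcell_eq HCell (lwhisk k (rwhisk a h)) (rwhisk (lwhisk k a) h);
  interchange : forall (A B C : Ob K) (f g : Hom A B) (h k : Hom B C)
      (a : Cell f g) (b : Cell h k),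
      vcomp (rwhisk b g) (lwhisk h a) = vcomp (lwhisk k a) (rwhisk b f)
}.

Definition is_iso {A B : Ob K} {f g : Hom A B} (a : Cell f g) : Prop :=
  exists b : Cell g f, vcomp b a = id2 f /\ vcomp a b = id2 g.

(* the power A^I by the free-living isomorphism I, with its strict
   (isomorphism-of-hom-categories) universal property *)
Record IPower (A : Ob K) := {
  pw_obj : Ob K;
  pw_dom : Hom pw_obj A;
  pw_cod : Hom pw_obj A;
  pw_iota : Cell pw_dom pw_cod;
  pw_iota_iso : is_iso pw_iota;
  pw_ex : forall (X : Ob K) (g h : Hom X A) (a : Cell g h), is_iso a ->
      exists u : Hom X pw_obj,
        comp1 pw_dom u = g /\ comp1 pw_cod u = h /\ hcell_eq HCell (rwhisk pw_iota u) a;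
  pw_uniq : forall (X : Ob K) (u u' : Hom X pw_obj),
      hcell_eq HCell (rwhisk pw_iota u) (rwhisk pw_iota u') -> u = u';
  pw_2d : forall (X : Ob K) (u v : Hom X pw_obj)
      (b : Cell (comp1 pw_dom u) (comp1 pw_dom v))
      (c : Cell (comp1 pw_cod u) (comp1 pw_cod v)),
      vcomp c (rwhisk pw_iota u) = vcomp (rwhisk pw_iota v) b ->
      exists! d : Cell u v, lwhisk pw_dom d = b /\ lwhisk pw_cod d = c
}.

(* the pseudolimit L_f of an arrow f : A -> B: an object L with
   u : L -> A, v : L -> B and an invertible lam : v => f u, with the
   universal property (isomorphism of hom-categories K(X,L) with the
   category of pseudo-cones over f with vertex X) *)
Record PsLim (HK : TwoCatAxioms) (A B : Ob K) (f : Hom A B) := {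
  pl_obj : Ob K;
  pl_u : Hom pl_obj A;
  pl_v : Hom pl_obj B;
  pl_lam : Cell pl_v (comp1 f pl_u);
  pl_lam_iso : is_iso pl_lam;
  pl_ex : forall (X : Ob K) (a : Hom X A) (b : Hom X B) (c : Cell b (comp1 f a)),
      is_iso c ->
      exists k : Hom X pl_obj,
        comp1 pl_u k = a /\ comp1 pl_v k = b /\ hcell_eq HCell (rwhisk pl_lam k) c;
  pl_uniq : forall (X : Ob K) (k k' : Hom X pl_obj),
      comp1 pl_u k = comp1 pl_u k' ->
      hcell_eq HCell (rwhisk pl_lam k) (rwhisk pl_lam k') -> k = k';
  pl_2d : forall (X : Ob K) (k k' : Hom X pl_obj)
      (b : Cell (comp1 pl_u k) (comp1 pl_u k'))
      (c : Cell (comp1 pl_v k) (comp1 pl_v k')),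
      vcomp (cast HCell (comp1_assoc HK f pl_u k) (comp1_assoc HK f pl_u k')
               (lwhisk f b))
            (rwhisk pl_lam k)
      = vcomp (rwhisk pl_lam k') c ->
      exists! d : Cell k k', lwhisk pl_u d = b /\ lwhisk pl_v d = c
}.

Definition rep_isofib {A B : Ob K} (f : Hom A B) : Prop :=
  forall (X : Ob K) (g : Hom X A) (h : Hom X B) (a : Cell (comp1 f g) h),
    is_iso a ->
    exists (h' : Hom X A) (a' : Cell g h'),
      is_iso a' /\ hcell_eq HCell (lwhisk f a') a.

Record cleavage {A B : Ob K} (f : Hom A B) := {
  cl_obj : forall (X : Ob K) (g : Hom X A) (h : Hom X B) (a : Cell (comp1 f g) h),
      is_iso a -> Hom X A;
  cl_cell : forall (X : Ob K) (g : Hom X A) (h : Hom X B) (a : Cell (comp1 f g) h)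
      (H : is_iso a), Cell g (cl_obj H);
  cl_iso : forall (X : Ob K) (g : Hom X A) (h : Hom X B) (a : Cell (comp1 f g) h)
      (H : is_iso a), is_iso (cl_cell H);
  cl_lift : forall (X : Ob K) (g : Hom X A) (h : Hom X B) (a : Cell (comp1 f g) h)
      (H : is_iso a), hcell_eq HCell (lwhisk f (cl_cell H)) a;
  cl_nat : forall (X Y : Ob K) (k : Hom Y X) (g : Hom X A) (h : Hom X B)
      (a : Cell (comp1 f g) h) (H : is_iso a)
      (ak : Cell (comp1 f (comp1 g k)) (comp1 h k)) (Hk : is_iso ak),
      hcell_eq HCell ak (rwhisk a k) ->
      hcell_eq HCell (cl_cell Hk) (rwhisk (cl_cell H) k)
}.

Definition normal_cleavage {A B : Ob K} {f : Hom A B} (c : cleavage f) : Prop :=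
  forall (X : Ob K) (g : Hom X A) (H : is_iso (id2 (comp1 f g))),
    hcell_eq HCell (cl_cell c H) (id2 g).

Definition normal_isofib {A B : Ob K} (f : Hom A B) : Prop :=
  rep_isofib f /\ exists c : cleavage f, normal_cleavage c.

Definition is_equivalence {A B : Ob K} (f : Hom A B) : Prop :=
  exists g : Hom B A,
    (exists eta : Cell (id1 A) (comp1 g f), is_iso eta) /\
    (exists eps : Cell (comp1 f g) (id1 B), is_iso eps).

Definition retract_equivalence {A B : Ob K} (f : Hom A B) : Prop :=
  is_equivalence f /\ exists s : Hom B A, comp1 f s = id1 B.

End Defs.

Arguments is_iso {K A B f g}.
Arguments rep_isofib {K A B}.
Arguments normal_isofib {K A B}.
Arguments retract_equivalence {K A B}.

From Stdlib Require Import ProofIrrelevance ClassicalEpsilon.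

(* Since u_f w_f = cod and v_f w_f = f dom, and invertible 2-cells into A^I or into L_f
   out of a fixed 1-cell are determined by their two components, an invertible
   a : w g => h is lifted along w exactly by lifting its v-component along f and pairing
   the result with its u-component into a 2-cell of A^I.  Conversely, an invertible
   a : f g => h is the v-component of an invertible 2-cell from w applied to the constant
   path at g to the map classifying (g, h, a^-1); the dom-component of a w-lift of that
   2-cell lifts a along f.  Both constructions are natural in X and send identities to
   identities, so they transport (normal) cleavages.  Finally, lifting lambda_f^-1 along f
   and classifying the result gives a section s of w, and s w is isomorphic to the
   identity because the two maps into A^I have isomorphic components. *)

Set Implicit Arguments.
Unset Strict Implicit.

Notation "a =~= b" := (hcell_eq (@Cell _ _ _) a b) (at level 70).

Section HeterogeneousCells.
Variable K : TwoCatData.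
Variable HK : TwoCatAxioms K.

Lemma hcell_refl {A B : Ob K} {f g : Hom A B} (a : Cell f g) : a =~= a.
Proof. exists eq_refl, eq_refl. reflexivity. Qed.

Lemma hcell_sym {A B : Ob K} {f g f' g' : Hom A B} (a : Cell f g) (b : Cell f' g') :
  a =~= b -> b =~= a.
Proof. intros [e1 [e2 E]]. subst f' g' b. apply hcell_refl. Qed.

Lemma hcell_trans {A B : Ob K} {f g f' g' f'' g'' : Hom A B}
  (a : Cell f g) (b : Cell f' g') (c : Cell f'' g'') : a =~= b -> b =~= c -> a =~= c.
Proof.
  intros [e1 [e2 E]] [e3 [e4 E']]. subst f' g' b f'' g'' c. apply hcell_refl.
Qed.

Lemma hcell_of_eq {A B : Ob K} {f g : Hom A B} (a b : Cell f g) : a = b -> a =~= b.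
Proof. intros <-. apply hcell_refl. Qed.

Lemma eq_of_hcell {A B : Ob K} {f g : Hom A B} (a b : Cell f g) : a =~= b -> a = b.
Proof.
  intros [e1 [e2 E]].
  rewrite (proof_irrelevance _ e1 eq_refl), (proof_irrelevance _ e2 eq_refl) in E.
  exact E.
Qed.

Lemma hcell_tgt {A B : Ob K} {f g f' g' : Hom A B} (a : Cell f g) (b : Cell f' g') :
  a =~= b -> g = g'.
Proof. intros [_ [e2 _]]. exact e2. Qed.

Lemma hcell_cast {A B : Ob K} {f g f' g' : Hom A B} (e1 : f = f') (e2 : g = g')
  (a : Cell f g) : cast (@Cell K A B) e1 e2 a =~= a.
Proof. subst f' g'. apply hcell_refl. Qed.

Lemma hcell_vcomp {A B : Ob K} {f g h f' g' h' : Hom A B} (a : Cell f g) (b : Cell g h)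
  (a' : Cell f' g') (b' : Cell g' h') :
  a =~= a' -> b =~= b' -> vcomp b a =~= vcomp b' a'.
Proof.
  intros [e1 [e2 Ea]] [e3 [e4 Eb]]. subst f' g'. simpl in Ea. subst a' h'.
  rewrite (proof_irrelevance _ e3 eq_refl) in Eb. simpl in Eb. subst b'.
  apply hcell_refl.
Qed.

Lemma hcell_lwhisk {A B C : Ob K} (h h' : Hom B C) {f g f' g' : Hom A B}
  (a : Cell f g) (a' : Cell f' g') : h = h' -> a =~= a' -> lwhisk h a =~= lwhisk h' a'.
Proof. intros <- [e1 [e2 E]]. subst f' g' a'. apply hcell_refl. Qed.

Lemma hcell_rwhisk {A B C : Ob K} (h h' : Hom A B) {f g f' g' : Hom B C}
  (a : Cell f g) (a' : Cell f' g') : a =~= a' -> h = h' -> rwhisk a h =~= rwhisk a' h'.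
Proof. intros [e1 [e2 E]] <-. subst f' g' a'. apply hcell_refl. Qed.

Lemma hcell_id2 {A B : Ob K} (f f' : Hom A B) : f = f' -> id2 f =~= id2 f'.
Proof. intros <-. apply hcell_refl. Qed.

Lemma hcell_vcomp_idl {A B : Ob K} {f g h : Hom A B} (b : Cell g h) (a : Cell f g)
  (p : Hom A B) : b =~= id2 p -> vcomp b a =~= a.
Proof.
  intros [e1 [e2 E]]. subst p h. simpl in E. subst b.
  rewrite (vcomp_idl HK). apply hcell_refl.
Qed.

Lemma hcell_lwhisk_id2 {A B C : Ob K} (h : Hom B C) {f g : Hom A B} (a : Cell f g)
  (p : Hom A B) : a =~= id2 p -> lwhisk h a =~= id2 (comp1 h p).
Proof.
  intros E. apply (hcell_trans (hcell_lwhisk eq_refl E)), hcell_of_eq, (lwhisk_id2 HK).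
Qed.

Lemma hcell_rwhisk_id2 {A B C : Ob K} (h : Hom A B) {f g : Hom B C} (a : Cell f g)
  (p : Hom B C) : a =~= id2 p -> rwhisk a h =~= id2 (comp1 p h).
Proof.
  intros E. apply (hcell_trans (hcell_rwhisk E eq_refl)), hcell_of_eq, (rwhisk_id2 HK).
Qed.

Lemma lwhisk_lwhisk {A B C D : Ob K} (k : Hom C D) (h : Hom B C) {f g : Hom A B}
  (a : Cell f g) : lwhisk k (lwhisk h a) =~= lwhisk (comp1 k h) a.
Proof. apply (lwhisk_comp1 HK). Qed.

Lemma rwhisk_rwhisk {A B C D : Ob K} {f g : Hom C D} (a : Cell f g) (h : Hom B C)
  (k : Hom A B) : rwhisk (rwhisk a h) k =~= rwhisk a (comp1 h k).
Proof. apply (rwhisk_comp1 HK). Qed.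

Lemma lwhisk_rwhisk {A B C D : Ob K} (k : Hom C D) {f g : Hom B C} (a : Cell f g)
  (h : Hom A B) : lwhisk k (rwhisk a h) =~= rwhisk (lwhisk k a) h.
Proof. apply (lrwhisk HK). Qed.

End HeterogeneousCells.

Section Isomorphisms.
Variable K : TwoCatData.
Variable HK : TwoCatAxioms K.

Lemma is_iso_id2 {A B : Ob K} (f : Hom A B) : is_iso (id2 f).
Proof. exists (id2 f). rewrite (vcomp_idl HK). auto. Qed.

Lemma is_iso_vcomp {A B : Ob K} {f g h : Hom A B} (b : Cell g h) (a : Cell f g) :
  is_iso a -> is_iso b -> is_iso (vcomp b a).
Proof.
  intros [a' [Ha1 Ha2]] [b' [Hb1 Hb2]]. exists (vcomp a' b'). split.
  - rewrite <- (vcomp_assoc HK), (vcomp_assoc HK b'), Hb1, (vcomp_idl HK). exact Ha1.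
  - rewrite <- (vcomp_assoc HK), (vcomp_assoc HK a), Ha2, (vcomp_idl HK). exact Hb2.
Qed.

Lemma is_iso_lwhisk {A B C : Ob K} (h : Hom B C) {f g : Hom A B} (a : Cell f g) :
  is_iso a -> is_iso (lwhisk h a).
Proof.
  intros [a' [E1 E2]]. exists (lwhisk h a').
  rewrite <- !(lwhisk_vcomp HK), E1, E2, !(lwhisk_id2 HK). auto.
Qed.

Lemma is_iso_rwhisk {A B C : Ob K} (h : Hom A B) {f g : Hom B C} (a : Cell f g) :
  is_iso a -> is_iso (rwhisk a h).
Proof.
  intros [a' [E1 E2]]. exists (rwhisk a' h).
  rewrite <- !(rwhisk_vcomp HK), E1, E2, !(rwhisk_id2 HK). auto.
Qed.

Lemma is_iso_hcell {A B : Ob K} {f g f' g' : Hom A B} (a : Cell f g) (b : Cell f' g') :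
  a =~= b -> is_iso a -> is_iso b.
Proof. intros [e1 [e2 E]]. subst f' g' b. auto. Qed.

Definition inv {A B : Ob K} {f g : Hom A B} (a : Cell f g) (H : is_iso a) : Cell g f :=
  proj1_sig (constructive_indefinite_description _ H).

Lemma vcomp_invl {A B : Ob K} {f g : Hom A B} (a : Cell f g) (H : is_iso a) :
  vcomp (inv H) a = id2 f.
Proof. exact (proj1 (proj2_sig (constructive_indefinite_description _ H))). Qed.

Lemma vcomp_invr {A B : Ob K} {f g : Hom A B} (a : Cell f g) (H : is_iso a) :
  vcomp a (inv H) = id2 g.
Proof. exact (proj2 (proj2_sig (constructive_indefinite_description _ H))). Qed.

Lemma is_iso_inv {A B : Ob K} {f g : Hom A B} (a : Cell f g) (H : is_iso a) :
  is_iso (inv H).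
Proof. exists a. split; [apply vcomp_invr | apply vcomp_invl]. Qed.

Lemma inv_unique {A B : Ob K} {f g : Hom A B} (a : Cell f g) (H : is_iso a)
  (b : Cell g f) : vcomp b a = id2 f -> b = inv H.
Proof.
  intros E.
  rewrite <- (vcomp_idr HK b), <- (vcomp_invr H), (vcomp_assoc HK), E, (vcomp_idl HK).
  reflexivity.
Qed.

Lemma hcell_inv {A B : Ob K} {f g f' g' : Hom A B} (a : Cell f g) (a' : Cell f' g')
  (H : is_iso a) (H' : is_iso a') : a =~= a' -> inv H =~= inv H'.
Proof.
  intros [e1 [e2 E]]. subst f' g' a'. rewrite (proof_irrelevance _ H H').
  apply hcell_refl.
Qed.

Lemma invK {A B : Ob K} {f g : Hom A B} (a : Cell f g) (H : is_iso a)
  (H' : is_iso (inv H)) : inv H' = a.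
Proof. symmetry. apply inv_unique, vcomp_invr. Qed.

Lemma inv_lwhisk {A B C : Ob K} (h : Hom B C) {f g : Hom A B} (a : Cell f g)
  (H : is_iso a) (H' : is_iso (lwhisk h a)) : inv H' = lwhisk h (inv H).
Proof.
  symmetry. apply inv_unique. rewrite <- (lwhisk_vcomp HK), vcomp_invl.
  apply (lwhisk_id2 HK).
Qed.

Lemma commuting_square_inv {A B : Ob K} {x y x' y' : Hom A B} (l : Cell x y)
  (l' : Cell x' y') (b : Cell x x') (c : Cell y y') (Hb : is_iso b) (Hc : is_iso c) :
  vcomp c l = vcomp l' b -> vcomp (inv Hc) l' = vcomp l (inv Hb).
Proof.
  intros E.
  rewrite <- (vcomp_idr HK (vcomp (inv Hc) l')), <- (vcomp_invr Hb), (vcomp_assoc HK),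
    <- (vcomp_assoc HK (inv Hc)), <- E, (vcomp_assoc HK), vcomp_invl, (vcomp_idl HK).
  reflexivity.
Qed.

End Isomorphisms.

Section Power.
Variable K : TwoCatData.
Variable HK : TwoCatAxioms K.
Variable A : Ob K.
Variable P : IPower A.

Local Notation dom := (pw_dom P).
Local Notation cod := (pw_cod P).
Local Notation iota := (pw_iota P).

Lemma pw_iota_nat {X : Ob K} {x y : Hom X (pw_obj P)} (d : Cell x y) :
  vcomp (lwhisk cod d) (rwhisk iota x) = vcomp (rwhisk iota y) (lwhisk dom d).
Proof. symmetry. apply (interchange HK). Qed.

Lemma pw_cell_ext {X : Ob K} {x y : Hom X (pw_obj P)} (d1 d2 : Cell x y) :
  lwhisk dom d1 = lwhisk dom d2 -> lwhisk cod d1 = lwhisk cod d2 -> d1 = d2.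
Proof.
  intros E1 E2. destruct (pw_2d (pw_iota_nat d1)) as [d [_ Hd]].
  rewrite <- (Hd d1 (conj eq_refl eq_refl)). apply Hd. auto.
Qed.

Lemma pw_cell_iso {X : Ob K} {x y : Hom X (pw_obj P)} (d : Cell x y) :
  is_iso (lwhisk dom d) -> is_iso (lwhisk cod d) -> is_iso d.
Proof.
  intros Hb Hc.
  destruct (pw_2d (commuting_square_inv HK Hb Hc (pw_iota_nat d))) as [d' [[E1 E2] _]].
  exists d'. split; apply pw_cell_ext;
    rewrite (lwhisk_vcomp HK), ?E1, ?E2, (lwhisk_id2 HK);
    first [apply vcomp_invl | apply vcomp_invr].
Qed.

Lemma pw_iota_conj {X : Ob K} {x y : Hom X (pw_obj P)} (d : Cell x y)
  (H : is_iso (lwhisk dom d)) :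
  rwhisk iota y = vcomp (vcomp (lwhisk cod d) (rwhisk iota x)) (inv H).
Proof.
  rewrite pw_iota_nat, <- (vcomp_assoc HK), (vcomp_invr H), (vcomp_idr HK).
  reflexivity.
Qed.

Lemma pw_iso_hcell_ext {X : Ob K} {x1 y1 x2 y2 : Hom X (pw_obj P)}
  (b1 : Cell x1 y1) (b2 : Cell x2 y2) :
  x1 = x2 -> is_iso b1 -> is_iso b2 ->
  lwhisk dom b1 =~= lwhisk dom b2 -> lwhisk cod b1 =~= lwhisk cod b2 -> b1 =~= b2.
Proof.
  intros <- H1 H2 E1 E2.
  assert (Ey : y1 = y2).
  { apply (@pw_uniq K A P).
    rewrite (pw_iota_conj (is_iso_lwhisk HK dom H1)),
            (pw_iota_conj (is_iso_lwhisk HK dom H2)).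
    apply hcell_vcomp; [apply hcell_inv, E1|].
    apply hcell_vcomp; [apply hcell_refl | exact E2]. }
  subst y2. apply hcell_of_eq, pw_cell_ext; apply eq_of_hcell; assumption.
Qed.

Lemma pw_cell_of_dom {X : Ob K} {x y : Hom X (pw_obj P)}
  (b : Cell (comp1 dom x) (comp1 dom y)) :
  comp1 cod x = comp1 cod y -> is_iso b -> vcomp (rwhisk iota y) b =~= rwhisk iota x ->
  exists d : Cell x y, is_iso d.
Proof.
  intros Ec Hb Eb.
  set (c := cast (@Cell K _ _) eq_refl Ec (id2 (comp1 cod x))).
  assert (E : vcomp c (rwhisk iota x) = vcomp (rwhisk iota y) b).
  { apply eq_of_hcell, (hcell_trans (hcell_vcomp_idl HK _ (hcell_cast _ _ _))).
    apply hcell_sym, Eb. }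
  destruct (pw_2d E) as [d [[E1 E2] _]].
  exists d. apply pw_cell_iso; rewrite ?E1, ?E2; trivial.
  eapply is_iso_hcell; [apply hcell_sym, hcell_cast | apply (is_iso_id2 HK)].
Qed.

Definition pw_map {X : Ob K} {g h : Hom X A} (a : Cell g h) (H : is_iso a) :
  Hom X (pw_obj P) := proj1_sig (constructive_indefinite_description _ (pw_ex P H)).

Lemma pw_dom_map {X : Ob K} {g h : Hom X A} (a : Cell g h) (H : is_iso a) :
  comp1 dom (pw_map H) = g.
Proof. exact (proj1 (proj2_sig (constructive_indefinite_description _ (pw_ex P H)))). Qed.

Lemma pw_cod_map {X : Ob K} {g h : Hom X A} (a : Cell g h) (H : is_iso a) :
  comp1 cod (pw_map H) = h.
Proof.
  exact (proj1 (proj2 (proj2_sig (constructive_indefinite_description _ (pw_ex P H))))).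
Qed.

Lemma pw_iota_map {X : Ob K} {g h : Hom X A} (a : Cell g h) (H : is_iso a) :
  rwhisk iota (pw_map H) =~= a.
Proof.
  exact (proj2 (proj2 (proj2_sig (constructive_indefinite_description _ (pw_ex P H))))).
Qed.

Lemma pw_lift {X : Ob K} {g : Hom X (pw_obj P)} {h0 h1 : Hom X A}
  (l : Cell (comp1 dom g) h0) (c : Cell (comp1 cod g) h1) :
  is_iso l -> is_iso c ->
  {h : Hom X (pw_obj P) & {b : Cell g h |
    is_iso b /\ lwhisk dom b =~= l /\ lwhisk cod b =~= c}}.
Proof.
  intros Hl Hc.
  assert (Ht : is_iso (vcomp c (vcomp (rwhisk iota g) (inv Hl)))).
  { apply (is_iso_vcomp HK); [apply (is_iso_vcomp HK)|]; trivial.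
    - apply is_iso_inv.
    - apply (is_iso_rwhisk HK), (pw_iota_iso P). }
  set (l' := cast (@Cell K _ _) eq_refl (eq_sym (pw_dom_map Ht)) l).
  set (c' := cast (@Cell K _ _) eq_refl (eq_sym (pw_cod_map Ht)) c).
  assert (E : vcomp c' (rwhisk iota g) = vcomp (rwhisk iota (pw_map Ht)) l').
  { apply eq_of_hcell.
    apply (hcell_trans (hcell_vcomp (hcell_refl _) (hcell_cast _ _ _))).
    apply hcell_sym.
    apply (hcell_trans (hcell_vcomp (hcell_cast _ _ _) (pw_iota_map Ht))).
    apply hcell_of_eq.
    rewrite <- !(vcomp_assoc HK), vcomp_invl, (vcomp_idr HK). reflexivity. }
  destruct (constructive_indefinite_description _ (pw_2d E)) as [b [[E1 E2] _]].
  exists (pw_map Ht), b. repeat split.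
  - apply pw_cell_iso; rewrite ?E1, ?E2;
      (eapply is_iso_hcell; [apply hcell_sym, hcell_cast | assumption]).
  - rewrite E1. apply hcell_cast.
  - rewrite E2. apply hcell_cast.
Qed.

End Power.

Section PseudoLimit.
Variable K : TwoCatData.
Variable HK : TwoCatAxioms K.
Variables (A B : Ob K) (f : Hom A B).
Variable L : PsLim HK f.

Local Notation u := (pl_u L).
Local Notation v := (pl_v L).
Local Notation lam := (pl_lam L).

Lemma pl_lam_nat {X : Ob K} {k k' : Hom X (pl_obj L)} (d : Cell k k') :
  vcomp (cast (@Cell K _ _) (comp1_assoc HK f u k) (comp1_assoc HK f u k')
           (lwhisk f (lwhisk u d)))
        (rwhisk lam k)
  = vcomp (rwhisk lam k') (lwhisk v d).
Proof.
  rewrite (interchange HK). f_equal. apply eq_of_hcell.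
  apply (hcell_trans (hcell_cast _ _ _)), (lwhisk_lwhisk HK).
Qed.

Lemma pl_cell_ext {X : Ob K} {k k' : Hom X (pl_obj L)} (d1 d2 : Cell k k') :
  lwhisk u d1 = lwhisk u d2 -> lwhisk v d1 = lwhisk v d2 -> d1 = d2.
Proof.
  intros E1 E2. destruct (pl_2d (pl_lam_nat d1)) as [d [_ Hd]].
  rewrite <- (Hd d1 (conj eq_refl eq_refl)). apply Hd. auto.
Qed.

Lemma pl_cell_iso {X : Ob K} {k k' : Hom X (pl_obj L)} (d : Cell k k') :
  is_iso (lwhisk u d) -> is_iso (lwhisk v d) -> is_iso d.
Proof.
  intros Hb Hc.
  set (fb := cast (@Cell K _ _) (comp1_assoc HK f u k) (comp1_assoc HK f u k')
               (lwhisk f (lwhisk u d))).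
  assert (Hfb : is_iso fb).
  { eapply is_iso_hcell; [apply hcell_sym, hcell_cast | apply (is_iso_lwhisk HK), Hb]. }
  assert (E : vcomp (cast (@Cell K _ _) (comp1_assoc HK f u k') (comp1_assoc HK f u k)
                       (lwhisk f (inv Hb))) (rwhisk lam k')
              = vcomp (rwhisk lam k) (inv Hc)).
  { rewrite <- (commuting_square_inv HK Hc Hfb (pl_lam_nat d)). f_equal.
    apply eq_of_hcell. apply (hcell_trans (hcell_cast _ _ _)).
    rewrite <- (inv_lwhisk HK (h := f) Hb (is_iso_lwhisk HK f Hb)).
    apply hcell_inv, hcell_sym, hcell_cast. }
  destruct (pl_2d E) as [d' [[E1 E2] _]].
  exists d'. split; apply pl_cell_ext;
    rewrite (lwhisk_vcomp HK), ?E1, ?E2, (lwhisk_id2 HK);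
    first [apply vcomp_invl | apply vcomp_invr].
Qed.

Lemma pl_lam_conj {X : Ob K} {k k' : Hom X (pl_obj L)} (d : Cell k k')
  (H : is_iso (lwhisk v d)) :
  rwhisk lam k' = vcomp (lwhisk (comp1 f u) d) (vcomp (rwhisk lam k) (inv H)).
Proof.
  rewrite (vcomp_assoc HK), <- (interchange HK), <- (vcomp_assoc HK), vcomp_invr,
    (vcomp_idr HK).
  reflexivity.
Qed.

Lemma pl_iso_hcell_ext {X : Ob K} {x1 y1 x2 y2 : Hom X (pl_obj L)}
  (b1 : Cell x1 y1) (b2 : Cell x2 y2) :
  x1 = x2 -> is_iso b1 -> is_iso b2 ->
  lwhisk u b1 =~= lwhisk u b2 -> lwhisk v b1 =~= lwhisk v b2 -> b1 =~= b2.
Proof.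
  intros <- H1 H2 E1 E2.
  assert (Ey : y1 = y2).
  { apply (@pl_uniq K HK A B f L); [exact (hcell_tgt E1)|].
    rewrite (pl_lam_conj (is_iso_lwhisk HK v H1)), (pl_lam_conj (is_iso_lwhisk HK v H2)).
    apply hcell_vcomp; [apply hcell_vcomp; [apply hcell_inv, E2 | apply hcell_refl]|].
    apply (hcell_trans (hcell_sym (lwhisk_lwhisk HK _ _ _))).
    apply (hcell_trans (hcell_lwhisk eq_refl E1)), (lwhisk_lwhisk HK). }
  subst y2. apply hcell_of_eq, pl_cell_ext; apply eq_of_hcell; assumption.
Qed.

Definition pl_map {X : Ob K} {a : Hom X A} {b : Hom X B} (c : Cell b (comp1 f a))
  (H : is_iso c) : Hom X (pl_obj L) :=
  proj1_sig (constructive_indefinite_description _ (pl_ex L H)).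

Lemma pl_u_map {X : Ob K} {a : Hom X A} {b : Hom X B} (c : Cell b (comp1 f a))
  (H : is_iso c) : comp1 u (pl_map H) = a.
Proof. exact (proj1 (proj2_sig (constructive_indefinite_description _ (pl_ex L H)))). Qed.

Lemma pl_v_map {X : Ob K} {a : Hom X A} {b : Hom X B} (c : Cell b (comp1 f a))
  (H : is_iso c) : comp1 v (pl_map H) = b.
Proof.
  exact (proj1 (proj2 (proj2_sig (constructive_indefinite_description _ (pl_ex L H))))).
Qed.

Lemma pl_lam_map {X : Ob K} {a : Hom X A} {b : Hom X B} (c : Cell b (comp1 f a))
  (H : is_iso c) : rwhisk lam (pl_map H) =~= c.
Proof.
  exact (proj2 (proj2 (proj2_sig (constructive_indefinite_description _ (pl_ex L H))))).
Qed.

End PseudoLimit.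

Section Cleavages.
Variable K : TwoCatData.
Variables (A B : Ob K) (f : Hom A B).
Variable c : cleavage f.

Lemma cl_cell_nat {X Y : Ob K} (k : Hom Y X) {g : Hom X A} {h : Hom X B}
  {a : Cell (comp1 f g) h} (H : is_iso a) {g' : Hom Y A} {h' : Hom Y B}
  {a' : Cell (comp1 f g') h'} (H' : is_iso a') :
  g' = comp1 g k -> a' =~= rwhisk a k -> cl_cell c H' =~= rwhisk (cl_cell c H) k.
Proof.
  intros -> E. pose proof (hcell_tgt E) as Eh. subst h'. exact (cl_nat c H H' E).
Qed.

Lemma cl_cell_normal (Hn : normal_cleavage c) {X : Ob K} {g : Hom X A} {h : Hom X B}
  {a : Cell (comp1 f g) h} (H : is_iso a) :
  a =~= id2 (comp1 f g) -> cl_cell c H =~= id2 g.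
Proof.
  intros [e1 [e2 E]]. subst h.
  rewrite (proof_irrelevance _ e1 eq_refl) in E. simpl in E. subst a. apply Hn.
Qed.

End Cleavages.

Section Comparison.
Variable K : TwoCatData.
Variable HK : TwoCatAxioms K.
Variables (A B : Ob K) (f : Hom A B).
Variable P : IPower A.
Variable L : PsLim HK f.
Variable w : Hom (pw_obj P) (pl_obj L).
Hypothesis Hwu : comp1 (pl_u L) w = pw_cod P.
Hypothesis Hwv : comp1 (pl_v L) w = comp1 f (pw_dom P).
Hypothesis Hwl : rwhisk (pl_lam L) w =~= lwhisk f (pw_iota P).

Local Notation dom := (pw_dom P).
Local Notation cod := (pw_cod P).
Local Notation iota := (pw_iota P).
Local Notation u := (pl_u L).
Local Notation v := (pl_v L).
Local Notation lam := (pl_lam L).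

Lemma u_w {X : Ob K} (k : Hom X (pw_obj P)) : comp1 u (comp1 w k) = comp1 cod k.
Proof. rewrite (comp1_assoc HK), Hwu. reflexivity. Qed.

Lemma v_w {X : Ob K} (k : Hom X (pw_obj P)) :
  comp1 v (comp1 w k) = comp1 f (comp1 dom k).
Proof. rewrite (comp1_assoc HK), Hwv, <- (comp1_assoc HK). reflexivity. Qed.

Lemma lam_w {X : Ob K} (k : Hom X (pw_obj P)) :
  rwhisk lam (comp1 w k) =~= lwhisk f (rwhisk iota k).
Proof.
  apply (hcell_trans (hcell_sym (rwhisk_rwhisk HK _ _ _))).
  apply (hcell_trans (hcell_rwhisk Hwl eq_refl)), hcell_sym, (lwhisk_rwhisk HK).
Qed.

Lemma lwhisk_u_w {X : Ob K} {k k' : Hom X (pw_obj P)} (b : Cell k k') :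
  lwhisk u (lwhisk w b) =~= lwhisk cod b.
Proof. apply (hcell_trans (lwhisk_lwhisk HK _ _ _)), hcell_lwhisk, hcell_refl. exact Hwu. Qed.

Lemma lwhisk_v_w {X : Ob K} {k k' : Hom X (pw_obj P)} (b : Cell k k') :
  lwhisk v (lwhisk w b) =~= lwhisk f (lwhisk dom b).
Proof.
  apply (hcell_trans (lwhisk_lwhisk HK _ _ _)).
  apply (hcell_trans (hcell_lwhisk Hwv (hcell_refl b))), hcell_sym, (lwhisk_lwhisk HK).
Qed.

Lemma w_iso_hcell_ext {X : Ob K} {x1 y1 x2 y2 : Hom X (pw_obj P)}
  (b1 : Cell x1 y1) (b2 : Cell x2 y2) :
  x1 = x2 -> is_iso b1 -> is_iso b2 ->
  lwhisk dom b1 =~= lwhisk dom b2 -> lwhisk w b1 =~= lwhisk w b2 -> b1 =~= b2.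
Proof.
  intros Ex H1 H2 Edom Ew. apply (pw_iso_hcell_ext HK); trivial.
  apply (hcell_trans (hcell_sym (lwhisk_u_w b1))).
  apply (hcell_trans (hcell_lwhisk eq_refl Ew)), lwhisk_u_w.
Qed.

Lemma w_lift_of_f_lift {X : Ob K} {g : Hom X (pw_obj P)} {h : Hom X (pl_obj L)}
  (a : Cell (comp1 w g) h) {h0 : Hom X A} (l : Cell (comp1 dom g) h0) :
  is_iso a -> is_iso l -> lwhisk f l =~= lwhisk v a ->
  {h' : Hom X (pw_obj P) & {b : Cell g h' |
    is_iso b /\ lwhisk w b =~= a /\ lwhisk dom b =~= l}}.
Proof.
  intros Ha Hl Hlf.
  set (c := cast (@Cell K _ _) (u_w g) eq_refl (lwhisk u a)).
  assert (Hc : is_iso c).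
  { eapply is_iso_hcell; [apply hcell_sym, hcell_cast | apply (is_iso_lwhisk HK), Ha]. }
  destruct (pw_lift HK Hl Hc) as [h' [b [Hb [Edom Ecod]]]].
  exists h', b. repeat split; trivial.
  apply pl_iso_hcell_ext; trivial.
  - apply (is_iso_lwhisk HK), Hb.
  - apply (hcell_trans (lwhisk_u_w b)), (hcell_trans Ecod), hcell_cast.
  - apply (hcell_trans (lwhisk_v_w b)), (hcell_trans (hcell_lwhisk eq_refl Edom)), Hlf.
Qed.

Definition v_part {X : Ob K} {g : Hom X (pw_obj P)} {h : Hom X (pl_obj L)}
  (a : Cell (comp1 w g) h) : Cell (comp1 f (comp1 dom g)) (comp1 v h) :=
  cast (@Cell K _ _) (v_w g) eq_refl (lwhisk v a).

Lemma hcell_v_part {X : Ob K} {g : Hom X (pw_obj P)} {h : Hom X (pl_obj L)}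
  (a : Cell (comp1 w g) h) : v_part a =~= lwhisk v a.
Proof. apply hcell_cast. Qed.

Lemma is_iso_v_part {X : Ob K} {g : Hom X (pw_obj P)} {h : Hom X (pl_obj L)}
  (a : Cell (comp1 w g) h) : is_iso a -> is_iso (v_part a).
Proof.
  intros Ha. eapply is_iso_hcell; [apply hcell_sym, hcell_v_part | apply (is_iso_lwhisk HK), Ha].
Qed.

Lemma rep_isofib_w_of_f : rep_isofib f -> rep_isofib w.
Proof.
  intros Hf X g h a Ha.
  destruct (Hf X _ _ (v_part a) (is_iso_v_part Ha)) as [h0 [l [Hl Hlf]]].
  destruct (w_lift_of_f_lift Ha Hl (hcell_trans Hlf (hcell_v_part a)))
    as [h' [b [Hb [Ew _]]]].
  exists h', b. auto.
Qed.

Definition const_path {X : Ob K} (g : Hom X A) : Hom X (pw_obj P) :=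
  pw_map P (is_iso_id2 HK g).

Lemma dom_const_path {X : Ob K} (g : Hom X A) : comp1 dom (const_path g) = g.
Proof. apply pw_dom_map. Qed.

Lemma cod_const_path {X : Ob K} (g : Hom X A) : comp1 cod (const_path g) = g.
Proof. apply pw_cod_map. Qed.

Lemma const_path_comp {X Y : Ob K} (g : Hom X A) (k : Hom Y X) :
  const_path (comp1 g k) = comp1 (const_path g) k.
Proof.
  apply (@pw_uniq K A P).
  apply (hcell_trans (pw_iota_map _ _)), hcell_sym.
  apply (hcell_trans (hcell_sym (rwhisk_rwhisk HK _ _ _))).
  apply (hcell_rwhisk_id2 HK), pw_iota_map.
Qed.

(* The lifting problem for [w] whose [dom]-lift solves the lifting problem [a] for [f]:
   from the constant path at [g] to the map classifying [(g, h, a^-1)]. *)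
Lemma w_problem_ex {X : Ob K} {g : Hom X A} {h : Hom X B} (a : Cell (comp1 f g) h)
  (Ha : is_iso a) :
  exists d : Cell (comp1 w (const_path g)) (pl_map L (is_iso_inv Ha)),
    is_iso d /\ lwhisk u d =~= id2 g /\ lwhisk v d =~= a.
Proof.
  assert (Eu : comp1 u (comp1 w (const_path g)) = comp1 u (pl_map L (is_iso_inv Ha))).
  { rewrite u_w, cod_const_path, pl_u_map. reflexivity. }
  assert (Ev : comp1 f g = comp1 v (comp1 w (const_path g))).
  { rewrite v_w, dom_const_path. reflexivity. }
  set (b := cast (@Cell K _ _) eq_refl Eu (id2 (comp1 u (comp1 w (const_path g))))).
  set (c := cast (@Cell K _ _) Ev (eq_sym (pl_v_map L (is_iso_inv Ha))) a).
  assert (E : vcomp (cast (@Cell K _ _) (comp1_assoc HK f u (comp1 w (const_path g)))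
                        (comp1_assoc HK f u (pl_map L (is_iso_inv Ha))) (lwhisk f b))
                    (rwhisk lam (comp1 w (const_path g)))
              = vcomp (rwhisk lam (pl_map L (is_iso_inv Ha))) c).
  { apply eq_of_hcell. apply (hcell_trans (b := id2 (comp1 f g))).
    - eapply hcell_trans; [eapply (hcell_vcomp_idl HK) |].
      + apply (hcell_trans (hcell_cast _ _ _)), (hcell_lwhisk_id2 HK), hcell_cast.
      + apply (hcell_trans (lam_w _)), (hcell_lwhisk_id2 HK), pw_iota_map.
    - apply hcell_sym, (hcell_trans (hcell_vcomp (hcell_cast _ _ _) (pl_lam_map _ _))).
      apply hcell_of_eq, vcomp_invl. }
  destruct (pl_2d E) as [d [[E1 E2] _]].
  exists d. repeat split.
  - apply pl_cell_iso; rewrite ?E1, ?E2.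
    + eapply is_iso_hcell; [apply hcell_sym, hcell_cast | apply (is_iso_id2 HK)].
    + eapply is_iso_hcell; [apply hcell_sym, hcell_cast | exact Ha].
  - rewrite E1. apply (hcell_trans (hcell_cast _ _ _)), hcell_id2.
    rewrite u_w. apply cod_const_path.
  - rewrite E2. apply hcell_cast.
Qed.

Definition w_problem {X : Ob K} {g : Hom X A} {h : Hom X B} (a : Cell (comp1 f g) h)
  (Ha : is_iso a) : Cell (comp1 w (const_path g)) (pl_map L (is_iso_inv Ha)) :=
  proj1_sig (constructive_indefinite_description _ (w_problem_ex Ha)).

Lemma w_problem_spec {X : Ob K} {g : Hom X A} {h : Hom X B} (a : Cell (comp1 f g) h)
  (Ha : is_iso a) :
  is_iso (w_problem Ha) /\ lwhisk u (w_problem Ha) =~= id2 g /\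
  lwhisk v (w_problem Ha) =~= a.
Proof. exact (proj2_sig (constructive_indefinite_description _ (w_problem_ex Ha))). Qed.

Lemma is_iso_w_problem {X : Ob K} {g : Hom X A} {h : Hom X B} (a : Cell (comp1 f g) h)
  (Ha : is_iso a) : is_iso (w_problem Ha).
Proof. apply w_problem_spec. Qed.

Lemma w_problem_nat {X Y : Ob K} (k : Hom Y X) {g : Hom X A} {h : Hom X B}
  {a : Cell (comp1 f g) h} (Ha : is_iso a)
  {ak : Cell (comp1 f (comp1 g k)) (comp1 h k)} (Hak : is_iso ak) :
  ak =~= rwhisk a k -> w_problem Hak =~= rwhisk (w_problem Ha) k.
Proof.
  intros E.
  destruct (w_problem_spec Ha) as [Hd [Edu Edv]].
  destruct (w_problem_spec Hak) as [Hdk [Edku Edkv]].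
  apply pl_iso_hcell_ext; trivial.
  - rewrite const_path_comp. apply (comp1_assoc HK).
  - apply (is_iso_rwhisk HK), Hd.
  - apply (hcell_trans Edku), hcell_sym.
    apply (hcell_trans (lwhisk_rwhisk HK _ _ _)), (hcell_rwhisk_id2 HK), Edu.
  - apply (hcell_trans Edkv), (hcell_trans E), hcell_sym.
    apply (hcell_trans (lwhisk_rwhisk HK _ _ _)), hcell_rwhisk; trivial.
Qed.

Lemma w_problem_id {X : Ob K} {g : Hom X A} {h : Hom X B} {a : Cell (comp1 f g) h}
  (Ha : is_iso a) : a =~= id2 (comp1 f g) -> w_problem Ha =~= id2 (comp1 w (const_path g)).
Proof.
  intros Ea. destruct (w_problem_spec Ha) as [Hd [Edu Edv]].
  apply pl_iso_hcell_ext; trivial.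
  - apply (is_iso_id2 HK).
  - apply (hcell_trans Edu), hcell_sym.
    apply (hcell_trans (hcell_of_eq (lwhisk_id2 HK _ _))), hcell_id2.
    rewrite u_w. apply cod_const_path.
  - apply (hcell_trans Edv), (hcell_trans Ea), hcell_sym.
    apply (hcell_trans (hcell_of_eq (lwhisk_id2 HK _ _))), hcell_id2.
    rewrite v_w, dom_const_path. reflexivity.
Qed.

Definition dom_lift {X : Ob K} {g : Hom X A} {h' : Hom X (pw_obj P)}
  (b : Cell (const_path g) h') : Cell g (comp1 dom h') :=
  cast (@Cell K _ _) (dom_const_path g) eq_refl (lwhisk dom b).

Lemma is_iso_dom_lift {X : Ob K} {g : Hom X A} {h' : Hom X (pw_obj P)}
  (b : Cell (const_path g) h') : is_iso b -> is_iso (dom_lift b).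
Proof.
  intros Hb. eapply is_iso_hcell; [apply hcell_sym, hcell_cast | apply (is_iso_lwhisk HK), Hb].
Qed.

Lemma lwhisk_dom_lift {X : Ob K} {g : Hom X A} {h : Hom X B} {a : Cell (comp1 f g) h}
  (Ha : is_iso a) {h' : Hom X (pw_obj P)} (b : Cell (const_path g) h') :
  lwhisk w b =~= w_problem Ha -> lwhisk f (dom_lift b) =~= a.
Proof.
  intros Eb.
  apply (hcell_trans (hcell_lwhisk eq_refl (hcell_cast _ _ _))).
  apply (hcell_trans (hcell_sym (lwhisk_v_w b))).
  apply (hcell_trans (hcell_lwhisk eq_refl Eb)), w_problem_spec.
Qed.

Lemma rep_isofib_f_of_w : rep_isofib w -> rep_isofib f.
Proof.
  intros Hw X g h a Ha.
  destruct (Hw X _ _ _ (is_iso_w_problem Ha)) as [h' [b [Hb Eb]]].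
  exists (comp1 dom h'), (dom_lift b).
  split; [apply is_iso_dom_lift, Hb | exact (lwhisk_dom_lift Eb)].
Qed.

Lemma v_part_nat {X Y : Ob K} (k : Hom Y X) {g : Hom X (pw_obj P)} {h : Hom X (pl_obj L)}
  (a : Cell (comp1 w g) h) (ak : Cell (comp1 w (comp1 g k)) (comp1 h k)) :
  ak =~= rwhisk a k -> v_part ak =~= rwhisk (v_part a) k.
Proof.
  intros E. apply (hcell_trans (hcell_v_part ak)), (hcell_trans (hcell_lwhisk eq_refl E)).
  apply (hcell_trans (lwhisk_rwhisk HK _ _ _)), hcell_rwhisk; [|reflexivity].
  apply hcell_sym, hcell_v_part.
Qed.

Lemma v_part_id2 {X : Ob K} (g : Hom X (pw_obj P)) :
  v_part (id2 (comp1 w g)) =~= id2 (comp1 f (comp1 dom g)).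
Proof.
  apply (hcell_trans (hcell_v_part _)), (hcell_trans (hcell_of_eq (lwhisk_id2 HK _ _))).
  apply hcell_id2, v_w.
Qed.

Section CleavageOfW.
Variable c : cleavage f.

Definition w_lift {X : Ob K} {g : Hom X (pw_obj P)} {h : Hom X (pl_obj L)}
  (a : Cell (comp1 w g) h) (Ha : is_iso a) :
  {h' : Hom X (pw_obj P) & {b : Cell g h' |
    is_iso b /\ lwhisk w b =~= a /\ lwhisk dom b =~= cl_cell c (is_iso_v_part Ha)}} :=
  w_lift_of_f_lift Ha (cl_iso c (is_iso_v_part Ha))
    (hcell_trans (cl_lift c (is_iso_v_part Ha)) (hcell_v_part a)).

Definition w_cl_cell {X : Ob K} {g : Hom X (pw_obj P)} {h : Hom X (pl_obj L)}
  (a : Cell (comp1 w g) h) (Ha : is_iso a) : Cell g (projT1 (w_lift Ha)) :=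
  proj1_sig (projT2 (w_lift Ha)).

Lemma w_cl_cell_spec {X : Ob K} {g : Hom X (pw_obj P)} {h : Hom X (pl_obj L)}
  (a : Cell (comp1 w g) h) (Ha : is_iso a) :
  is_iso (w_cl_cell Ha) /\ lwhisk w (w_cl_cell Ha) =~= a /\
  lwhisk dom (w_cl_cell Ha) =~= cl_cell c (is_iso_v_part Ha).
Proof. exact (proj2_sig (projT2 (w_lift Ha))). Qed.

Lemma w_cl_cell_nat (X Y : Ob K) (k : Hom Y X) (g : Hom X (pw_obj P))
  (h : Hom X (pl_obj L)) (a : Cell (comp1 w g) h) (Ha : is_iso a)
  (ak : Cell (comp1 w (comp1 g k)) (comp1 h k)) (Hak : is_iso ak) :
  ak =~= rwhisk a k -> w_cl_cell Hak =~= rwhisk (w_cl_cell Ha) k.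
Proof.
  intros E.
  destruct (w_cl_cell_spec Ha) as [Hb [Ew Edom]].
  destruct (w_cl_cell_spec Hak) as [Hbk [Ewk Edomk]].
  apply w_iso_hcell_ext; trivial.
  - apply (is_iso_rwhisk HK), Hb.
  - apply (hcell_trans Edomk).
    apply (hcell_trans (cl_cell_nat c (is_iso_v_part Ha) (is_iso_v_part Hak)
                          (comp1_assoc HK dom g k) (v_part_nat E))).
    apply hcell_sym, (hcell_trans (lwhisk_rwhisk HK _ _ _)), hcell_rwhisk; trivial.
  - apply (hcell_trans Ewk), (hcell_trans E), hcell_sym.
    apply (hcell_trans (lwhisk_rwhisk HK _ _ _)), hcell_rwhisk; trivial.
Qed.

Definition cleavage_w_of_f : cleavage w :=
  @Build_cleavage K _ _ w (fun X g h a Ha => projT1 (w_lift Ha))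
    (fun X g h a Ha => w_cl_cell Ha)
    (fun X g h a Ha => proj1 (w_cl_cell_spec Ha))
    (fun X g h a Ha => proj1 (proj2 (w_cl_cell_spec Ha)))
    w_cl_cell_nat.

Lemma normal_cleavage_w_of_f : normal_cleavage c -> normal_cleavage cleavage_w_of_f.
Proof.
  intros Hn X g Ha. simpl.
  destruct (w_cl_cell_spec Ha) as [Hb [Ew Edom]].
  apply w_iso_hcell_ext; trivial.
  - apply (is_iso_id2 HK).
  - apply (hcell_trans Edom), (hcell_trans (cl_cell_normal Hn _ (v_part_id2 g))).
    apply hcell_sym, hcell_of_eq, (lwhisk_id2 HK).
  - apply (hcell_trans Ew), hcell_sym, hcell_of_eq, (lwhisk_id2 HK).
Qed.

End CleavageOfW.

Section CleavageOfF.
Variable c : cleavage w.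

Definition f_cl_cell {X : Ob K} {g : Hom X A} {h : Hom X B} (a : Cell (comp1 f g) h)
  (Ha : is_iso a) : Cell g (comp1 dom (cl_obj c (is_iso_w_problem Ha))) :=
  dom_lift (cl_cell c (is_iso_w_problem Ha)).

Lemma f_cl_cell_nat (X Y : Ob K) (k : Hom Y X) (g : Hom X A) (h : Hom X B)
  (a : Cell (comp1 f g) h) (Ha : is_iso a) (ak : Cell (comp1 f (comp1 g k)) (comp1 h k))
  (Hak : is_iso ak) :
  ak =~= rwhisk a k -> f_cl_cell Hak =~= rwhisk (f_cl_cell Ha) k.
Proof.
  intros E. unfold f_cl_cell.
  apply (hcell_trans (hcell_cast _ _ _)).
  apply (hcell_trans (hcell_lwhisk eq_refl
    (cl_cell_nat c (is_iso_w_problem Ha) (is_iso_w_problem Hak)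
       (const_path_comp g k) (w_problem_nat Ha Hak E)))).
  apply (hcell_trans (lwhisk_rwhisk HK _ _ _)), hcell_rwhisk; [|reflexivity].
  apply hcell_sym, hcell_cast.
Qed.

Definition cleavage_f_of_w : cleavage f :=
  @Build_cleavage K _ _ f (fun X g h a Ha => comp1 dom (cl_obj c (is_iso_w_problem Ha)))
    (fun X g h a Ha => f_cl_cell Ha)
    (fun X g h a Ha => is_iso_dom_lift (cl_iso c (is_iso_w_problem Ha)))
    (fun X g h a Ha => lwhisk_dom_lift (cl_lift c (is_iso_w_problem Ha)))
    f_cl_cell_nat.

Lemma normal_cleavage_f_of_w : normal_cleavage c -> normal_cleavage cleavage_f_of_w.
Proof.
  intros Hn X g Ha. simpl. unfold f_cl_cell.
  apply (hcell_trans (hcell_cast _ _ _)).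
  apply (hcell_trans (hcell_lwhisk_id2 HK _
    (cl_cell_normal Hn _ (w_problem_id Ha (hcell_refl _))))).
  apply hcell_id2, dom_const_path.
Qed.

End CleavageOfF.

Section SectionOfW.
Variables (h1 : Hom (pl_obj L) A) (a1 : Cell u h1).
Hypothesis Ha1 : is_iso a1.
Hypothesis Ea1 : lwhisk f a1 =~= inv (pl_lam_iso L).

Local Notation s := (pw_map P (is_iso_inv Ha1)).

Lemma w_section : comp1 w s = id1 (pl_obj L).
Proof.
  apply (@pl_uniq K HK A B f L).
  - rewrite u_w, pw_cod_map, (comp1_idr HK). reflexivity.
  - apply (hcell_trans (lam_w _)), (hcell_trans (hcell_lwhisk eq_refl (pw_iota_map _ _))).
    rewrite <- (inv_lwhisk HK Ha1 (is_iso_lwhisk HK f Ha1)).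
    apply (hcell_trans (hcell_inv _ (is_iso_inv (pl_lam_iso L)) Ea1)).
    rewrite (invK HK). apply hcell_sym, (rwhisk_id1 HK).
Qed.

Lemma w_section_retraction : exists eta : Cell (id1 (pw_obj P)) (comp1 s w), is_iso eta.
Proof.
  set (iota' := cast (@Cell K _ _) eq_refl (eq_sym Hwu) iota).
  assert (Edom : comp1 h1 w = comp1 dom (comp1 s w)).
  { rewrite (comp1_assoc HK), pw_dom_map. reflexivity. }
  apply (pw_cell_of_dom HK) with (b := cast (@Cell K _ _) (eq_sym (comp1_idr HK dom)) Edom
                                     (vcomp (rwhisk a1 w) iota')).
  - rewrite (comp1_idr HK), (comp1_assoc HK), pw_cod_map, Hwu. reflexivity.
  - eapply is_iso_hcell; [apply hcell_sym, hcell_cast|].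
    apply (is_iso_vcomp HK); [|apply (is_iso_rwhisk HK), Ha1].
    eapply is_iso_hcell; [apply hcell_sym, hcell_cast | apply (pw_iota_iso P)].
  - eapply hcell_trans; [apply hcell_vcomp; [apply hcell_cast |]|].
    + apply (hcell_trans (hcell_sym (rwhisk_rwhisk HK _ _ _))).
      apply hcell_rwhisk; [apply pw_iota_map | reflexivity].
    + rewrite (vcomp_assoc HK), <- (rwhisk_vcomp HK), vcomp_invl, (rwhisk_id2 HK),
        (vcomp_idl HK).
      apply (hcell_trans (hcell_cast _ _ _)), hcell_sym, (rwhisk_id1 HK).
Qed.

End SectionOfW.

Lemma retract_equivalence_w : rep_isofib f -> retract_equivalence w.
Proof.
  intros Hf.
  destruct (Hf _ u v (inv (pl_lam_iso L)) (is_iso_inv _)) as [h1 [a1 [Ha1 Ea1]]].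
  pose proof (w_section Ha1 Ea1) as Hws.
  split; [|eexists; exact Hws].
  exists (pw_map P (is_iso_inv Ha1)). split; [exact (w_section_retraction Ha1)|].
  exists (cast (@Cell K _ _) eq_refl Hws (id2 _)).
  eapply is_iso_hcell; [apply hcell_sym, hcell_cast | apply (is_iso_id2 HK)].
Qed.

End Comparison.

Theorem proposition3p9 (K : TwoCatData) (HK : TwoCatAxioms K)
  (pw : forall A : Ob K, IPower A)
  (pl : forall (A B : Ob K) (f : Hom A B), PsLim HK f)
  (A B : Ob K) (f : Hom A B)
  (w : Hom (pw_obj (pw A)) (pl_obj (pl A B f)))
  (Hwu : comp1 (pl_u (pl A B f)) w = pw_cod (pw A))
  (Hwv : comp1 (pl_v (pl A B f)) w = comp1 f (pw_dom (pw A)))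
  (Hwl : hcell_eq (@Cell K _ _) (rwhisk (pl_lam (pl A B f)) w) (lwhisk f (pw_iota (pw A)))) :
  (rep_isofib f <-> rep_isofib w) /\
  (normal_isofib f <-> normal_isofib w) /\
  (rep_isofib f -> retract_equivalence w).
Proof.
  split; [|split].
  - split; [apply (rep_isofib_w_of_f Hwu Hwv) | apply (rep_isofib_f_of_w Hwu Hwv Hwl)].
  - split; intros [Hiso [c Hc]]; split.
    + apply (rep_isofib_w_of_f Hwu Hwv Hiso).
    + exists (cleavage_w_of_f Hwu Hwv c). apply normal_cleavage_w_of_f, Hc.
    + apply (rep_isofib_f_of_w Hwu Hwv Hwl Hiso).
    + exists (cleavage_f_of_w Hwu Hwv Hwl c). apply normal_cleavage_f_of_w, Hc.
  - apply (retract_equivalence_w Hwu Hwl).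
Qed.
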